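(* Let $R$ be a set, $\mathcal{G}:(\mathbf{1},R)\rightarrow(Y,R)$ an object of $\mathrm{2Open}_R$, $\mathcal{H}$ an $F_\mathcal{G}$-coalgebra, and $\hat{E}_\mathcal{H}$, $\Phi$ as in the context. Let $\sigma\in\Sigma_\omega$ and $k:Y^\omega\rightarrow R$ with $\sigma\in\hat{E}_\mathcal{H}(k)$. Then $\sigma\in\Phi(\hat{E}_\mathcal{H})(k)$.
   Context: Fix a set $R$. Objects of $\mathrm{2Open}_R$ are open games $\mathcal{H}:(\mathbf{1},R)\rightarrow(Y_\mathcal{H},R)$ given by a strategy set $\Sigma_\mathcal{H}$, a move set $Y_\mathcal{H}$, a play function $P_\mathcal{H}:\Sigma_\mathcal{H}\rightarrow Y_\mathcal{H}$, an equilibrium function $E_\mathcal{H}:(Y_\mathcal{H}\rightarrow R)\rightarrow\mathcal{P}\Sigma_\mathcal{H}$, and identity coutility $C\,\sigma\,r=r$. A morphism $\beta:\mathcal{H}\rightarrow\mathcal{H}'$ is a pair $\beta_Y:Y_\mathcal{H}\rightarrow Y_{\mathcal{H}'}$, $\beta_\Sigma:\Sigma_\mathcal{H}\rightarrow\Sigma_{\mathcal{H}'}$ with $\beta_Y(P_\mathcal{H}\sigma)=P_{\mathcal{H}'}(\beta_\Sigma\sigma)$ for all $\sigma$, and such that for all $\sigma\in\Sigma_\mathcal{H}$ and $k:Y_{\mathcal{H}'}\rightarrow R$, $\sigma\in E_\mathcal{H}(k\circ\beta_Y)$ implies $\beta_\Sigma(\sigma)\in E_{\mathcal{H}'}(k)$.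 For the fixed $\mathcal{G}$ (data $\Sigma_\mathcal{G},Y,P_\mathcal{G},E_\mathcal{G}$) and any object $\mathcal{H}$, $F_\mathcal{G}\mathcal{H}$ is the game with strategies $\Sigma_\mathcal{G}\times(Y\rightarrow\Sigma_\mathcal{H})$, moves $Y\times Y_\mathcal{H}$, play $P(\sigma,f)=(P_\mathcal{G}\sigma,P_\mathcal{H}(f(P_\mathcal{G}\sigma)))$, identity coutility, and $(\sigma,f)\in E_{F_\mathcal{G}\mathcal{H}}(k)$ iff $\sigma\in E_\mathcal{G}(\lambda y.\,k(y,P_\mathcal{H}(f\,y)))$ and $f(y')\in E_\mathcal{H}(\lambda z.\,k(y',z))$ for all $y'\in Y$. An $F_\mathcal{G}$-coalgebra is an object $\mathcal{H}$ with a morphism $\mathcal{H}\rightarrow F_\mathcal{G}\mathcal{H}$, whose strategy component is written $\langle\mathrm{now}_\mathcal{H},\mathrm{ltr}_\mathcal{H}\rangle:\Sigma_\mathcal{H}\rightarrow\Sigma_\mathcal{G}\times(Y\rightarrow\Sigma_\mathcal{H})$ and move component $\langle\mathrm{hd}_\mathcal{H},\mathrm{tl}_\mathcal{H}\rangle:Y_\mathcal{H}\rightarrow Y\times Y_\mathcal{H}$. Notation: $Y^*$ finite words over $Y$, $\epsilon$ the empty word, $Y^\omega$ infinite streams over $Y$, $y\mathrel{::}w$ prepending. $\Sigma_\omega=Y^*\rightarrow\Sigma_\mathcal{G}$. For $\sigma\in\Sigma_\omega$, $\sigma_0=\sigma(\epsilon)$ and $\sigma'=\lambda y.\lambda w.\,\sigma(yw)$.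 $P_\omega:\Sigma_\omega\rightarrow Y^\omega$ is the unique function with $P_\omega\sigma=P_\mathcal{G}\sigma_0\mathrel{::}P_\omega(\sigma'(P_\mathcal{G}\sigma_0))$. The operator $\Phi$ on $(\mathcal{P}\Sigma_\omega)^{(Y^\omega\rightarrow R)}$ is defined by: $\sigma\in\Phi(\Gamma)(k)$ iff $\sigma_0\in E_\mathcal{G}(\lambda y.\,k(y\mathrel{::}P_\omega(\sigma'y)))$ and for all $y'\in Y$, $\sigma'y'\in\Gamma(\lambda z.\,k(y'\mathrel{::}z))$. $\mathrm{unf}_\Sigma:\Sigma_\mathcal{H}\rightarrow\Sigma_\omega$ and $\mathrm{unf}_Y:Y_\mathcal{H}\rightarrow Y^\omega$ are the unique functions with $\mathrm{unf}_\Sigma(\tau)(\epsilon)=\mathrm{now}_\mathcal{H}(\tau)$, $\mathrm{unf}_\Sigma(\tau)(yw)=\mathrm{unf}_\Sigma(\mathrm{ltr}_\mathcal{H}(\tau)(y))(w)$, and $\mathrm{unf}_Y(z)=\mathrm{hd}_\mathcal{H}(z)\mathrel{::}\mathrm{unf}_Y(\mathrm{tl}_\mathcal{H}(z))$. The indexed predicate $\hat{E}_\mathcal{H}:(Y^\omega\rightarrow R)\rightarrow\mathcal{P}\Sigma_\omega$ is defined by: $\sigma\in\hat{E}_\mathcal{H}(k)$ iff there exists $\tau\in\Sigma_\mathcal{H}$ with $\mathrm{unf}_\Sigma(\tau)=\sigma$ and $\tau\in E_\mathcal{H}(k\circ\mathrm{unf}_Y)$. *)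

From Stdlib Require Import List.
Import ListNotations.
Set Implicit Arguments.

(* Objects of 2Open_R: open games (1,R) -> (Y_H,R) with identity coutility.
   Subsets P(Sigma) are represented as predicates Sigma -> Prop. *)
Record game (R : Type) := Game {
  Sig : Type;
  Mv  : Type;
  Pl  : Sig -> Mv;
  Eqm : (Mv -> R) -> Sig -> Prop
}.

Definition is_morphism (R : Type) (H H' : game R)
  (bY : Mv H -> Mv H') (bS : Sig H -> Sig H') : Prop :=
  (forall s, bY (Pl H s) = Pl H' (bS s)) /\
  (forall (s : Sig H) (k : Mv H' -> R),
      Eqm H (fun y => k (bY y)) s -> Eqm H' k (bS s)).

Definition FG (R : Type) (G H : game R) : game R :=
  @Game R (Sig G * (Mv G -> Sig H)) (Mv G * Mv H)
    (fun p => (Pl G (fst p), Pl H (snd p (Pl G (fst p)))))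
    (fun k p =>
       Eqm G (fun y => k (y, Pl H (snd p y))) (fst p) /\
       forall y', Eqm H (fun z => k (y', z)) (snd p y')).

Record coalg (R : Type) (G : game R) := Coalg {
  car : game R;
  cY  : Mv car -> Mv G * Mv car;
  cS  : Sig car -> Sig G * (Mv G -> Sig car);
  cmor : @is_morphism R car (FG G car) cY cS
}.

Definition hd R G (H : @coalg R G) (z : Mv (car H)) : Mv G := fst (cY H z).
Definition tl R G (H : @coalg R G) (z : Mv (car H)) : Mv (car H) := snd (cY H z).
Definition now R G (H : @coalg R G) (t : Sig (car H)) : Sig G := fst (cS H t).
Definition ltr R G (H : @coalg R G) (t : Sig (car H)) : Mv G -> Sig (car H) :=
  snd (cS H t).

(* Infinite streams Y^omega as functions nat -> Y; finite words Y^* as lists. *)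
Definition stream (Y : Type) := nat -> Y.
Definition scons (Y : Type) (y : Y) (s : stream Y) : stream Y :=
  fun n => match n with O => y | S m => s m end.

Fixpoint iterl (A : Type) (n : nat) (f : A -> A) (x : A) : A :=
  match n with O => x | S m => iterl m f (f x) end.

Definition Sig_om R (G : game R) := list (Mv G) -> Sig G.
Definition s0 R (G : game R) (s : Sig_om G) : Sig G := s nil.
Definition sder R (G : game R) (s : Sig_om G) : Mv G -> Sig_om G :=
  fun y w => s (y :: w).

(* P_omega: the unique function with P_om s = P_G s0 :: P_om (s' (P_G s0)). *)
Definition Pom_step R (G : game R) (s : Sig_om G) : Sig_om G :=
  sder s (Pl G (s0 s)).
Definition Pom R (G : game R) (s : Sig_om G) : stream (Mv G) :=
  fun n => Pl G (s0 (iterl n (@Pom_step R G) s)).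

Definition Phi R (G : game R)
  (Gam : (stream (Mv G) -> R) -> Sig_om G -> Prop)
  (k : stream (Mv G) -> R) (s : Sig_om G) : Prop :=
  Eqm G (fun y => k (scons y (Pom (sder s y)))) (s0 s) /\
  forall y', Gam (fun z => k (scons y' z)) (sder s y').

Fixpoint unfS R G (H : @coalg R G) (t : Sig (car H)) (w : list (Mv G)) : Sig G :=
  match w with
  | nil => now H t
  | y :: w' => unfS H (ltr H t y) w'
  end.
Definition unfY R G (H : @coalg R G) (z : Mv (car H)) : stream (Mv G) :=
  fun n => hd H (iterl n (tl H) z).

Definition Ehat R G (H : @coalg R G) (k : stream (Mv G) -> R) (s : Sig_om G) : Prop :=
  exists t : Sig (car H), unfS H t = s /\ Eqm (car H) (fun z => k (unfY H z)) t.

From Stdlib Require Import FunctionalExtensionality.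
Set Implicit Arguments.

(* Unfolding commutes with the coalgebra structure: on strategies, [unfS]
   turns [now]/[ltr] into [s0]/[sder] by computation; on moves, [unfY z] is
   [hd z :: unfY (tl z)]; and on plays, [Pom (unfS t) = unfY (P_H t)] because
   the structure map preserves play.  Hence an equilibrium [t] of [H] for
   [k o unfY] is, through the structure map, an equilibrium of [F_G H] for the
   payoff [(y, z) |-> k (y :: unfY z)], whose two clauses are the two clauses
   of [Phi], the continuations being witnessed by [ltr t y']. *)

Section Unfolding.

Variables (R : Type) (G : game R) (H : coalg G).

Lemma s0_unfS (t : Sig (car H)) : s0 (unfS H t) = now H t.
Proof. reflexivity. Qed.

Lemma sder_unfS (t : Sig (car H)) (y : Mv G) :
  sder (unfS H t) y = unfS H (ltr H t y).
Proof. reflexivity. Qed.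

Lemma Pom_step_unfS (t : Sig (car H)) :
  Pom_step (unfS H t) = unfS H (ltr H t (Pl G (now H t))).
Proof. reflexivity. Qed.

Lemma hd_Pl (t : Sig (car H)) : hd H (Pl (car H) t) = Pl G (now H t).
Proof. unfold hd; rewrite (proj1 (cmor H) t); reflexivity. Qed.

Lemma tl_Pl (t : Sig (car H)) :
  tl H (Pl (car H) t) = Pl (car H) (ltr H t (Pl G (now H t))).
Proof. unfold tl; rewrite (proj1 (cmor H) t); reflexivity. Qed.

Lemma unfY_scons (z : Mv (car H)) : unfY H z = scons (hd H z) (unfY H (tl H z)).
Proof. apply functional_extensionality; intros [|n]; reflexivity. Qed.

Lemma Pom_unfS (t : Sig (car H)) : Pom (unfS H t) = unfY H (Pl (car H) t).
Proof.
  apply functional_extensionality; intro n; unfold Pom, unfY.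
  revert t; induction n as [|n IHn]; intro t; simpl.
  - now rewrite hd_Pl.
  - now rewrite Pom_step_unfS, IHn, tl_Pl.
Qed.

Lemma coalg_Eqm (K : Mv G * Mv (car H) -> R) (t : Sig (car H)) :
  Eqm (car H) (fun z => K (cY H z)) t ->
  Eqm G (fun y => K (y, Pl (car H) (ltr H t y))) (now H t) /\
  forall y', Eqm (car H) (fun z => K (y', z)) (ltr H t y').
Proof. exact (proj2 (cmor H) t K). Qed.

End Unfolding.

Theorem lemma15 (R : Type) (G : game R) (H : coalg G)
  (s : Sig_om G) (k : stream (Mv G) -> R) :
  Ehat H k s -> Phi (Ehat H) k s.
Proof.
  intros [t [<- Ht]].
  set (K := fun p : Mv G * Mv (car H) => k (scons (fst p) (unfY H (snd p)))).
  assert (Hpay : (fun z => k (unfY H z)) = (fun z => K (cY H z))).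
  { apply functional_extensionality; intro z; now rewrite unfY_scons. }
  rewrite Hpay in Ht.
  apply coalg_Eqm in Ht; destruct Ht as [Hnow Hltr].
  split.
  - rewrite s0_unfS.
    replace (fun y => k (scons y (Pom (sder (unfS H t) y))))
      with (fun y => k (scons y (unfY H (Pl (car H) (ltr H t y))))).
    + exact Hnow.
    + apply functional_extensionality; intro y; now rewrite sder_unfS, Pom_unfS.
  - intro y'; exists (ltr H t y'); split.
    + symmetry; apply sder_unfS.
    + exact (Hltr y').
Qed.
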